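(* Let $N\ge2$, and for $\bar x,\alpha\in\mathbb{R}$, $t\ge0$ define $$\Psi_L(\bar x,\alpha,t):=\alpha+\exp\!\left(-\tfrac{N-1}{N}t\right)(\bar x-\alpha).$$ Let $x(t)=(x_1(t),\dots,x_N(t))$, $x_i(t)\in\mathbb{R}$, be a (Carathéodory) solution of $$\dot x_i(t)=\frac1N\sum_{j=1}^N M_{ij}(t)(x_j-x_i),\qquad i=1,\dots,N,$$ with Lebesgue measurable $M_{ij}:[0,+\infty)\to[0,1]$, such that $x_i(0)\ge\alpha$ for all $i$, and let $\bar x\ge\alpha$. Let $T>0$. If there exist an index $I$ and a time $\tau\in[0,T]$ with $x_I(\tau)\ge\Psi_L(\bar x,\alpha,\tau)$, then $x_I(t)\ge\Psi_L(\bar x,\alpha,t)$ for all $t\ge\tau$. *)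

From HB Require Import structures.
From mathcomp Require Import all_boot all_order all_algebra.
From mathcomp Require Import all_classical all_reals all_analysis.
Set Implicit Arguments. Unset Strict Implicit. Unset Printing Implicit Defensive.
Import Order.TTheory GRing.Theory Num.Theory.
Import numFieldNormedType.Exports.
Local Open Scope classical_set_scope.
Local Open Scope ring_scope.

Definition PsiL {R : realType} (N : nat) (xbar alpha t : R) : R :=
  alpha + expR (- ((N%:R - 1) / N%:R * t)) * (xbar - alpha).

Definition consensus_rhs {R : realType} (N : nat)
  (M : 'I_N -> 'I_N -> R -> R) (x : 'I_N -> R -> R) (i : 'I_N) (s : R) : R :=
  N%:R^-1 * \sum_(j < N) M i j s * (x j s - x i s).

(* Lebesgue measurability: measurability w.r.t. the completed Lebesgue
   sigma-algebra on the domain (Borel sigma-algebra on the codomain R). *)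
Definition measurable_fun_wrt {d} {T : measurableType d} {S} {R : realType}
  (mu : set T -> S) (D : set T) (f : T -> R) : Prop := measurable_fun D f.
Definition lebesgue_measurable_fun {R : realType} (D : set R) (f : R -> R) : Prop :=
  measurable_fun_wrt (@completed_lebesgue_measure R) D f.

(* Caratheodory solution on [0, +oo): for every t >= 0 the right-hand side is
   Lebesgue integrable on [0,t] and x_i(t) = x_i(0) + int_0^t rhs_i(s) ds
   (equivalently, x_i is locally absolutely continuous with x_i' = rhs_i a.e.). *)
Definition caratheodory_solution {R : realType} (N : nat)
  (M : 'I_N -> 'I_N -> R -> R) (x : 'I_N -> R -> R) : Prop :=
  forall (i : 'I_N) (t : R), 0 <= t ->
    (@completed_lebesgue_measure R).-integrable `[0, t] (EFin \o consensus_rhs M x i) /\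
    x i t = x i 0 + Rintegral (@completed_lebesgue_measure R) `[0, t] (consensus_rhs M x i).

(* Write c = (N - 1) / N.  Since M_ij takes values in [0, 1] and the i-th term
   of the sum vanishes, the right-hand side F_i is at least -c K whenever
   x_k - x_i >= -K for all k.  Solutions are locally Lipschitz, so on a short
   interval [s, t] this bound can be evaluated at the endpoints up to an error
   O((t - s)^2).  For y = min_k x_k - alpha this gives y s - K (t - s)^2 <= y t,
   hence x_k >= alpha for all times; then for y = x_I - alpha it gives
   y s - K (t - s)^2 <= (1 + c (t - s)) y t.  Iterating the latter along finer
   and finer grids (a discrete Gronwall argument) yields
   y t >= exp (-c (t - tau)) y tau, which is the claim because
   PsiL t - alpha = exp (-c t) (xbar - alpha). *)

From HB Require Import structures.
From mathcomp Require Import all_boot all_order all_algebra.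
From mathcomp Require Import all_classical all_reals all_analysis.
From mathcomp Require Import ring lra.
Import Order.TTheory GRing.Theory Num.Theory.
Import numFieldNormedType.Exports.
Local Open Scope classical_set_scope.
Local Open Scope ring_scope.

Section DiscreteGronwall.
Context {R : realType}.
Variables (y : R -> R) (a c K T : R).
Hypotheses (c_ge0 : 0 <= c) (K_ge0 : 0 <= K) (ya_ge0 : 0 <= y a).
Hypothesis step : forall s t, a <= s -> s <= t -> t <= T ->
  y s - K * (t - s) ^+ 2 <= (1 + c * (t - s)) * y t.

Lemma gronwall_grid (h : R) (n : nat) : 0 <= h -> a + n%:R * h <= T ->
  expR (- (c * (n%:R * h))) * y a - n%:R * (K * h ^+ 2) <= y (a + n%:R * h).
Proof.
move=> h_ge0; elim: n => [|n IHn] hT.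
  by rewrite ?(mul0r, mulr0, oppr0, expR0, mul1r, subr0, addr0).
have hn : a + n%:R * h <= a + n.+1%:R * h by rewrite lerD2l ler_wpM2r ?ler_nat.
have {}IHn := IHn (le_trans hn hT).
have tE : a + n.+1%:R * h - (a + n%:R * h) = h by rewrite -addn1 natrD; ring.
have := step (a + n%:R * h) (a + n.+1%:R * h)
  ltac:(by rewrite lerDl mulr_ge0) hn hT.
rewrite tE => hstep.
set E := expR (- (c * (n.+1%:R * h))).
have E_ge0 : 0 <= E := expR_ge0 _.
have expE : (1 + c * h) * E <= expR (- (c * (n%:R * h))).
  have -> : - (c * (n%:R * h)) = c * h + - (c * (n.+1%:R * h)).
    by rewrite -addn1 natrD; ring.
  by rewrite expRD ler_wpM2r // expR_ge1Dx.
have q_ge1 : 1 <= 1 + c * h by rewrite lerDl mulr_ge0.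
rewrite -(@ler_pM2l _ (1 + c * h)); last lra.
have Ey : (1 + c * h) * E * y a <= expR (- (c * (n%:R * h))) * y a by rewrite ler_wpM2r.
have nK : 0 <= n.+1%:R * (K * h ^+ 2) by rewrite mulr_ge0 // mulr_ge0 // sqr_ge0.
have := mulr_ge0 (mulr_ge0 c_ge0 h_ge0) nK.
have : n.+1%:R * (K * h ^+ 2) = n%:R * (K * h ^+ 2) + K * h ^+ 2.
  by rewrite -addn1 natrD mulrDl mul1r.
nra.
Qed.

Lemma gronwall_lower_bound t : a <= t -> t <= T -> expR (- (c * (t - a))) * y a <= y t.
Proof.
move=> at_ tT; apply/ler_addgt0Pr => e e_gt0.
pose D := K * (t - a) ^+ 2.
pose n := (Num.truncn (D / e)).+1.
have n_gt0 : 0 < n%:R :> R by rewrite ltr0n.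
pose h := (t - a) / n%:R.
have h_ge0 : 0 <= h by rewrite divr_ge0 ?subr_ge0.
have ahE : a + n%:R * h = t by rewrite /h mulrC divfK ?gt_eqF //; ring.
have := @gronwall_grid h n h_ge0; rewrite ahE => /(_ tT).
have -> : n%:R * h = t - a by rewrite -ahE; ring.
have Dn : n%:R * (K * h ^+ 2) = D / n%:R by rewrite /D /h; field; rewrite gt_eqF.
have : D / e < n%:R := truncnS_gt _.
rewrite Dn ltr_pdivrMr // => De; suff : D / n%:R <= e by lra.
by rewrite ler_pdivrMr // mulrC ltW.
Qed.

End DiscreteGronwall.

Section CompletedLebesgueIntegral.
Variable R : realType.
Local Notation mu := (@completed_lebesgue_measure R).
Local Notation CT := (caratheodory_type (wlength (R:=R) idfun)^*%mu).

Lemma completed_measurable_itv (i : interval R) : measurable ([set` i] : set CT).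
Proof. by apply: sub_caratheodory; apply: measurable_itv. Qed.

Lemma completed_lebesgue_measure_itv_oc (s t : R) : s <= t ->
  mu (`]s, t] : set CT) = (t - s)%:E.
Proof.
move=> st; have := @lebesgue_measure_itv R `]s, t].
(* Both measures are restrictions of the outer measure induced by [wlength idfun]. *)
rewrite /lebesgue_measure /completed_lebesgue_measure.
rewrite /completed_lebesgue_stieltjes_measure /completed_measure_extension.
rewrite /lebesgue_stieltjes_measure /measure_extension /= => ->.
rewrite lte_fin; have [//|ts] := ltP s t.
suff -> : t = s by rewrite subrr.
by apply/eqP; rewrite eq_le st ts.
Qed.

Lemma Rintegral_itv_oc_ge (g : R -> R) (s t K : R) : s <= t ->
  mu.-integrable (`]s, t] : set CT) (EFin \o g) ->
  (forall u, s < u <= t -> K <= g u) ->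
  K * (t - s) <= \int[mu]_(u in (`]s, t] : set CT)) g u.
Proof.
move=> st ig gK.
have mst := completed_measurable_itv `]s, t].
rewrite -[t - s]/(fine (t - s)%:E) -completed_lebesgue_measure_itv_oc //.
rewrite -Rintegral_cst //.
apply: le_Rintegral => //.
apply: measurable_bounded_integrable => //; last exact: bounded_cst.
change (mu (`]s, t] : set CT) < +oo)%E.
by rewrite completed_lebesgue_measure_itv_oc // ltry.
Qed.

Lemma Rintegral_itv_cc_split (g : R -> R) (r s t : R) : r <= s <= t ->
  mu.-integrable (`[r, t] : set CT) (EFin \o g) ->
  \int[mu]_(u in (`[r, t] : set CT)) g u =
  \int[mu]_(u in (`[r, s] : set CT)) g u + \int[mu]_(u in (`]s, t] : set CT)) g u.
Proof.
move=> /andP[rs st] ig.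
have itvE : (`[r, t]%classic : set CT) = `[r, s]%classic `|` `]s, t]%classic.
  apply/seteqP; split => u /=; rewrite !in_itv /=.
    by move=> /andP[ru ut]; case: (lerP u s) => us; [left|right]; rewrite ?ru ?us ?ut.
  by case=> /andP[h1 h2]; apply/andP; split; lra.
rewrite itvE Rintegral_setU -?itvE //; try exact: completed_measurable_itv.
apply/disj_setPS => u /= []; rewrite !in_itv /= => /andP[_ us] /andP[su _].
by move: su; rewrite ltNge us.
Qed.

End CompletedLebesgueIntegral.

Section ConsensusSystem.
Context {R : realType} {N : nat} {M : 'I_N -> 'I_N -> R -> R} {x : 'I_N -> R -> R}.
Hypothesis M01 : forall i j t, 0 <= t -> 0 <= M i j t <= 1.
Local Notation F := (consensus_rhs M x).
Local Notation c := ((N%:R - 1) / N%:R : R).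
Local Notation mu := (@completed_lebesgue_measure R).
Local Notation CT := (caratheodory_type (wlength (R:=R) idfun)^*%mu).

Lemma consensus_rate_ge0 : 0 <= c.
Proof. by case: N => [|n]; rewrite ?invr0 ?mulr0 // -natr1 addrK divr_ge0. Qed.

Lemma consensus_rhs_ge i u K : 0 <= u -> 0 <= K ->
  (forall k, - K <= x k u - x i u) -> - (c * K) <= F i u.
Proof.
move=> u0 K0 hK; have N_gt0 : (0 < N)%N := leq_ltn_trans (leq0n i) (ltn_ord i).
have mul01_ge m d : 0 <= m <= 1 -> - K <= d -> - K <= m * d.
  move=> /andP[m0 m1] Kd; have [d0|d_lt0] := lerP 0 d.
    by have := mulr_ge0 m0 d0; lra.
  have : 0 <= (1 - m) * (- d) by apply: mulr_ge0; lra.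
  lra.
rewrite /consensus_rhs (bigD1 i) //= subrr mulr0 add0r.
have : \sum_(k < N | k != i) - K <= \sum_(k < N | k != i) M i k u * (x k u - x i u).
  by apply: ler_sum => k _; apply: mul01_ge; [exact: M01 | exact: hK].
rewrite sumr_const cardC1 card_ord => hsum.
have -> : - (c * K) = N%:R^-1 * (- K *+ N.-1).
  by rewrite -[- K *+ _]mulr_natr -subn1 natrB //; field; rewrite pnatr_eq0 -lt0n.
by rewrite ler_pM2l // invr_gt0 ltr0n.
Qed.

Hypothesis hsol : caratheodory_solution M x.

Lemma solution_increment_ge i s t K : 0 <= s -> s <= t ->
  (forall u, s < u <= t -> K <= F i u) -> K * (t - s) <= x i t - x i s.
Proof.
move=> s0 st hK; have t0 := le_trans s0 st.
have [it ->] := hsol i t t0; have [_ ->] := hsol i s s0.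
rewrite (@Rintegral_itv_cc_split _ _ _ s) ?s0 //.
suff : K * (t - s) <= \int[mu]_(u in (`]s, t] : set CT)) F i u by lra.
apply: Rintegral_itv_oc_ge => //.
apply: integrableS it => //; try exact: completed_measurable_itv.
by move=> u /=; rewrite !in_itv /= => /andP[su ->]; rewrite (le_trans s0) // ltW.
Qed.

Lemma solution_bounded T : 0 <= T ->
  exists2 B, 0 <= B & forall j u, 0 <= u <= T -> `|x j u| <= B.
Proof.
move=> T0; pose B j := `|x j 0| + \int[mu]_(u in (`[0, T] : set CT)) `|F j u|.
have B_ge0 j : 0 <= B j by rewrite addr_ge0 // Rintegral_ge0.
exists (\sum_j B j); first exact: sumr_ge0.
move=> j u /andP[u0 uT]; apply: le_trans (_ : B j <= _); last first.
  by rewrite (bigD1 j) //= lerDl sumr_ge0.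
have [iu ->] := hsol j u u0; have [iT _] := hsol j T T0.
apply: (le_trans (ler_normD _ _)); rewrite lerD2l.
apply: (le_trans (le_normr_Rintegral _ _)) => //; first exact: completed_measurable_itv.
rewrite [leRHS](@Rintegral_itv_cc_split _ _ _ u) ?u0 ?lerDl ?Rintegral_ge0 //.
exact: integrable_norm.
Qed.

Lemma solution_lower_lipschitz T : 0 <= T -> exists2 L, 0 <= L &
  forall i s t, 0 <= s -> s <= t -> t <= T -> - (L * (t - s)) <= x i t - x i s.
Proof.
move=> T0; have [B B0 hB] := solution_bounded T T0.
exists (c * (2 * B)); first by rewrite mulr_ge0 ?consensus_rate_ge0 // mulr_ge0.
move=> i s t s0 st tT; rewrite -mulNr; apply: solution_increment_ge => // u /andP[su ut].
have uT : 0 <= u <= T by apply/andP; split; lra.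
apply: consensus_rhs_ge => [||k]; [lra | lra |].
by have := hB k u uT; have := hB i u uT; rewrite !ler_norml; lra.
Qed.

Section LipschitzSteps.
Context {T L : R}.
Hypothesis L_ge0 : 0 <= L.
Hypothesis xlip : forall i s t, 0 <= s -> s <= t -> t <= T ->
  - (L * (t - s)) <= x i t - x i s.

Lemma solution_ge_step b s t : 0 <= s -> s <= t -> t <= T ->
  (forall k, b <= x k s) -> forall j, b - c * L * (t - s) ^+ 2 <= x j t.
Proof.
move=> s0 st tT hb j; have c0 := consensus_rate_ge0.
have [bj|jb] := lerP b (x j t).
  by have := mulr_ge0 (mulr_ge0 c0 L_ge0) (sqr_ge0 (t - s)); lra.
suff : - (c * (L * (t - s))) * (t - s) <= x j t - x j s by have := hb j; lra.
apply: solution_increment_ge => // u /andP[su ut].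
apply: consensus_rhs_ge => [||k]; [lra | by rewrite mulr_ge0 //; lra |].
have := xlip k s u s0 (ltW su) (le_trans ut tT).
have := xlip j u t (le_trans s0 (ltW su)) ut tT.
have := hb k; lra.
Qed.

Lemma solution_gap_step alpha I s t : (forall k u, 0 <= u -> alpha <= x k u) ->
  0 <= s -> s <= t -> t <= T ->
  x I s - alpha - c * L * (t - s) ^+ 2 <= (1 + c * (t - s)) * (x I t - alpha).
Proof.
move=> xa s0 st tT; have c0 := consensus_rate_ge0.
suff : - (c * (x I t - alpha + L * (t - s))) * (t - s) <= x I t - x I s by lra.
apply: solution_increment_ge => // u /andP[su ut].
have u0 : 0 <= u by lra.
apply: le_trans (@consensus_rhs_ge I u (x I u - alpha) u0 _ _).
- rewrite lerN2 ler_wpM2l //.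
  have : L * (t - u) <= L * (t - s) by rewrite ler_wpM2l //; lra.
  by have := xlip I u t u0 ut tT; lra.
- by have := xa I u u0; lra.
- by move=> k; have := xa k u u0; lra.
Qed.

End LipschitzSteps.

Lemma solution_ge_initial_lower_bound alpha : (forall i, alpha <= x i 0) ->
  forall j t, 0 <= t -> alpha <= x j t.
Proof.
move=> hx0 j t t0; have [L L0 xlip] := solution_lower_lipschitz t t0.
pose m u := \big[Order.min/x j u]_k x k u.
have m_le u k : m u <= x k u := bigmin_le _ _ _.
have m_ge b u : (forall k, b <= x k u) -> b <= m u.
  by move=> hb; apply/bigmin_geP; split=> // k _.
have step s u : 0 <= s -> s <= u -> u <= t ->
    m s - alpha - c * L * (u - s) ^+ 2 <= (1 + 0 * (u - s)) * (m u - alpha).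
  move=> s0 su ut; rewrite mul0r addr0 mul1r.
  have := m_ge _ _ (solution_ge_step L0 xlip _ _ _ s0 su ut (m_le s)); lra.
have := gronwall_lower_bound (fun u => m u - alpha) 0 0 (c * L) t (lexx 0)
  (mulr_ge0 consensus_rate_ge0 L0) _ step t t0 (lexx t).
rewrite mul0r oppr0 expR0 mul1r.
have := m_le t j; have := m_ge alpha 0 hx0; lra.
Qed.

End ConsensusSystem.

Theorem proposition4 (R : realType) (N : nat) (hN : (2 <= N)%N)
  (M : 'I_N -> 'I_N -> R -> R) (x : 'I_N -> R -> R) (alpha xbar T : R)
  (hMmeas : forall i j : 'I_N, lebesgue_measurable_fun `[(0:R), +oo[ (M i j))
  (hMrange : forall (i j : 'I_N) (t : R), 0 <= t -> 0 <= M i j t <= 1)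
  (hsol : caratheodory_solution M x)
  (hx0 : forall i : 'I_N, alpha <= x i 0)
  (hxbar : alpha <= xbar)
  (hT : 0 < T)
  (I : 'I_N) (tau : R) (htau : 0 <= tau <= T)
  (hI : PsiL N xbar alpha tau <= x I tau) :
  forall t : R, tau <= t -> PsiL N xbar alpha t <= x I t.
Proof.
(* Measurability of [M] is implied by the integrability in [hsol]. *)
move=> t tau_t; have /andP[tau0 _] := htau; have t0 := le_trans tau0 tau_t.
have x_ge := solution_ge_initial_lower_bound hMrange hsol alpha hx0.
have [L L0 xlip] := solution_lower_lipschitz hMrange hsol t t0.
pose c : R := (N%:R - 1) / N%:R; have c0 : 0 <= c := @consensus_rate_ge0 R N.
have step s u : tau <= s -> s <= u -> u <= t ->
    x I s - alpha - c * L * (u - s) ^+ 2 <= (1 + c * (u - s)) * (x I u - alpha).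
  move=> tau_s su ut.
  by have := solution_gap_step hMrange hsol L0 xlip alpha I s u x_ge
    (le_trans tau0 tau_s) su ut.
have gap_tau_ge0 : 0 <= x I tau - alpha by rewrite subr_ge0 x_ge.
have := gronwall_lower_bound (fun u => x I u - alpha) tau c (c * L) t c0
  (mulr_ge0 c0 L0) gap_tau_ge0 step t tau_t (lexx t).
move: hI; rewrite /PsiL -/c.
have -> : - (c * t) = - (c * (t - tau)) + - (c * tau) by ring.
rewrite expRD => hI; have := expR_ge0 (- (c * (t - tau))); nra.
Qed.
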